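(* Under the hypotheses and notation of the context, let $\mathcal{S}=\{x_1,\dots,x_k\}\times\mathbb{R}$. Let $\theta^{\mathrm{approx}}$ be any gradient-based update of $\theta^{\mathrm{full}}$ in which every dataset $D_t$ used satisfies $D_t\subseteq\mathcal{S}$. Then $$\|\theta^{\setminus k}-\theta^{\mathrm{res}}\|_2\le\|\theta^{\setminus k}-\theta^{\mathrm{approx}}\|_2 .$$
   Context: Let $x_1,\dots,x_n\in\mathbb{R}^d$, $y_1,\dots,y_n\in\mathbb{R}$, $1\le k\le d$, $n-k\ge d$, with the $x_i$ in general position, and fix $\lambda\ge0$. $X$ is the matrix with rows $x_i^\intercal$, $Y=(y_i)$. $\theta^{\mathrm{full}}=\arg\min_\theta\sum_{i=1}^n\frac12(\theta^\intercal x_i-y_i)^2+\frac\lambda2\|\theta\|^2$ and $\theta^{\setminus k}=\arg\min_\theta\sum_{i=k+1}^n\frac12(\theta^\intercal x_i-y_i)^2+\frac\lambda2\|\theta\|^2$. With $\hat y^{\setminus k}_i=(\theta^{\setminus k})^\intercal x_i$ and $A$ the Moore–Penrose pseudoinverse of $\sum_{i=1}^k x_ix_i^\intercal$, the projective residual update is $\theta^{\mathrm{res}}=\theta^{\mathrm{full}}-A\sum_{i=1}^k((\theta^{\mathrm{full}})^\intercal x_i-\hat y^{\setminus k}_i)x_i$. For a finite dataset $D=\{(\bar x_i,\bar y_i)\}_{i=1}^N$ set $L^D(\theta)=\sum_{i=1}^N\frac12(\theta^\intercal\bar x_i-\bar y_i)^2$. A gradient-based update of $\theta^{\mathrm{full}}$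 is any vector $\theta^{\mathrm{approx}}=\theta_T$ obtained by $\theta_0=\theta^{\mathrm{full}}$, $\theta_{t+1}=\theta_t-\alpha_t\nabla_\theta L^{D_t}(\theta_t)$ for some $T\ge0$, scalars $\alpha_t\in\mathbb{R}$ and finite datasets $D_t$. *)

(* Real numbers are modelled by an arbitrary real closed field
   R : rcfType (the statement is purely algebraic/order-theoretic). *)
From HB Require Import structures.
From mathcomp Require Import all_boot all_order all_algebra.
Set Implicit Arguments. Unset Strict Implicit. Unset Printing Implicit Defensive.
Import Order.TTheory GRing.Theory Num.Theory.
Local Open Scope ring_scope.

Section Defs.
Variable R : rcfType.

Definition vdot (d : nat) (u v : 'cV[R]_d) : R := \sum_(j < d) u j 0 * v j 0.
Definition norm2 (d : nat) (v : 'cV[R]_d) : R := Num.sqrt (vdot v v).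

Definition xpt (n d : nat) (X : 'M[R]_(n, d)) (i : 'I_n) : 'cV[R]_d := (row i X)^T.

Definition general_position (n d : nat) (X : 'M[R]_(n, d)) : Prop :=
  forall f : 'I_d -> 'I_n, injective f ->
    \det (\matrix_(i < d, j < d) X (f i) j) != 0.

Definition loss_full (n d : nat) (X : 'M[R]_(n, d)) (Y : 'cV[R]_n) (lam : R)
  (th : 'cV[R]_d) : R :=
  \sum_(i < n) 2^-1 * (vdot th (xpt X i) - Y i 0) ^+ 2 + lam / 2 * vdot th th.

(* objective with the first k points removed: sum_{i=k+1}^n ...  (0-based: i >= k) *)
Definition loss_minus (n d k : nat) (X : 'M[R]_(n, d)) (Y : 'cV[R]_n) (lam : R)
  (th : 'cV[R]_d) : R :=
  \sum_(i < n | (k <= i)%N) 2^-1 * (vdot th (xpt X i) - Y i 0) ^+ 2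
  + lam / 2 * vdot th th.

Definition is_argmin (d : nat) (L : 'cV[R]_d -> R) (th : 'cV[R]_d) : Prop :=
  forall th', L th <= L th'.

(* A is the Moore-Penrose pseudoinverse of M (Penrose conditions; over a real
   field the conjugate transpose is the transpose) *)
Definition is_MP_pinv (d : nat) (M A : 'M[R]_d) : Prop :=
  [/\ M *m A *m M = M, A *m M *m A = A,
      (M *m A)^T = M *m A & (A *m M)^T = A *m M].

(* a finite dataset: a finite set (duplicate-free list) of pairs (xbar, ybar) *)
Definition dataset (d : nat) := seq ('cV[R]_d * R).

(* gradient of L^D(θ) = sum 1/2 (θ^T xbar - ybar)^2, i.e. sum (θ^T xbar - ybar) xbar *)
Definition gradL (d : nat) (D : dataset d) (th : 'cV[R]_d) : 'cV[R]_d :=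
  \sum_(p <- D) (vdot th p.1 - p.2) *: p.1.

Fixpoint gd_iter (d : nat) (th0 : 'cV[R]_d) (alpha : nat -> R)
  (Ds : nat -> dataset d) (t : nat) : 'cV[R]_d :=
  match t with
  | 0 => th0
  | t'.+1 => let th := gd_iter th0 alpha Ds t' in
             th - alpha t' *: gradL (Ds t') th
  end.

Definition theta_res (n d k : nat) (X : 'M[R]_(n, d)) (A : 'M[R]_d)
  (thfull thminus : 'cV[R]_d) : 'cV[R]_d :=
  thfull - A *m (\sum_(i < n | (i < k)%N)
                   (vdot thfull (xpt X i) - vdot thminus (xpt X i)) *: xpt X i).

End Defs.

(* Let M = \sum_(i < k) x_i x_i^T and P = A M, with A the Moore-Penrose
   pseudoinverse of M. Then P is the orthogonal projection onto the span of
   x_1, ..., x_k, and theta^{\k} - theta^res = (1 - P) (theta^{\k} - theta^full).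
   Every gradient of a loss on data from {x_1, ..., x_k} x R lies in that span,
   so theta^approx - theta^full does too. Among the points of the affine space
   theta^full + span(x_i), the orthogonal projection theta^res of theta^{\k}
   is the nearest one, by Pythagoras. *)
From HB Require Import structures.
From mathcomp Require Import all_boot all_order all_algebra.
Import Order.TTheory GRing.Theory Num.Theory.
Local Open Scope ring_scope.

Section InnerProduct.
Variables (R : rcfType) (d : nat).
Implicit Types u v w : 'cV[R]_d.

Lemma vdot_mx u v : vdot u v = (u^T *m v) 0 0.
Proof. by rewrite /vdot !mxE; apply: eq_bigr => j _; rewrite !mxE. Qed.

Lemma vdotC u v : vdot u v = vdot v u.
Proof. by rewrite /vdot; apply: eq_bigr => j _; rewrite mulrC. Qed.

Lemma vdotBl u v w : vdot (u - v) w = vdot u w - vdot v w.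
Proof. by rewrite !vdot_mx linearB /= mulmxBl !mxE. Qed.

Lemma vdotDl u v w : vdot (u + v) w = vdot u w + vdot v w.
Proof. by rewrite !vdot_mx linearD /= mulmxDl !mxE. Qed.

Lemma vdotDr u v w : vdot u (v + w) = vdot u v + vdot u w.
Proof. by rewrite !vdot_mx mulmxDr !mxE. Qed.

Lemma vdot_ge0 u : 0 <= vdot u u.
Proof. by apply: sumr_ge0 => j _; rewrite -expr2 sqr_ge0. Qed.

Lemma vdot_eq0 u : vdot u u = 0 -> u = 0.
Proof.
move=> u0; apply/matrixP => j l; rewrite (ord1 l) mxE.
have sq_ge0 (i : 'I_d) : true -> 0 <= u i 0 * u i 0.
  by move=> _; rewrite -expr2 sqr_ge0.
by move: (psumr_eq0P sq_ge0 u0 (i := j) isT) => /eqP; rewrite mulf_eq0 orbb => /eqP.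
Qed.

Lemma vdot_sym_mxl (P : 'M[R]_d) u v : P^T = P -> vdot (P *m u) v = vdot u (P *m v).
Proof. by move=> Psym; rewrite !vdot_mx trmx_mul Psym mulmxA. Qed.

Lemma vdot_orthogonal_le u v : vdot u v = 0 -> vdot u u <= vdot (u + v) (u + v).
Proof.
move=> uv0; rewrite vdotDl !vdotDr (vdotC v u) uv0 addr0 add0r.
by rewrite lerDl vdot_ge0.
Qed.

Lemma norm2_sub_proj_le (P : 'M[R]_d) w v :
  P^T = P -> P *m P = P -> P *m v = v -> norm2 (w - P *m w) <= norm2 (w - v).
Proof.
move=> Psym Pidem Pv.
have -> : w - v = (w - P *m w) + P *m (w - v) by rewrite mulmxBr Pv addrA subrK.
rewrite /norm2 ler_sqrt ?vdot_ge0 //; apply: vdot_orthogonal_le.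
by rewrite vdotBl vdot_sym_mxl // mulmxA Pidem subrr.
Qed.

Lemma mulmx_sum_outer n (x : 'I_n -> 'cV[R]_d) (Q : pred 'I_n) u :
  (\sum_(i | Q i) x i *m (x i)^T) *m u = \sum_(i | Q i) vdot u (x i) *: x i.
Proof.
rewrite mulmx_suml; apply: eq_bigr => i _.
by rewrite -mulmxA [_ *m u]mx11_scalar mul_mx_scalar -vdot_mx vdotC.
Qed.

(* [A *m M] fixes every generator [x i] of the Gram-type matrix [M]: the
   defect [y] is killed by [M], so it is orthogonal to all [x j], and it is
   orthogonal to the range of the symmetric [A *m M] since [A *m M *m y = 0]. *)
Lemma pinv_proj_fix_outer n (x : 'I_n -> 'cV[R]_d) (Q : pred 'I_n) (M A : 'M[R]_d) :
  M = \sum_(i | Q i) x i *m (x i)^T -> M *m A *m M = M -> (A *m M)^T = A *m M ->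
  forall i, Q i -> A *m M *m x i = x i.
Proof.
move=> defM MAM Psym i Qi; set y := x i - A *m M *m x i.
have My : M *m y = 0 by rewrite mulmxBr !mulmxA MAM subrr.
have yx_sq0 : \sum_(j | Q j) vdot y (x j) ^+ 2 = 0.
  transitivity (vdot y (M *m y)); last by rewrite My vdot_mx mulmx0 mxE.
  rewrite defM mulmx_sum_outer vdot_mx mulmx_sumr summxE; apply: eq_bigr => j _.
  by rewrite -scalemxAr mxE -vdot_mx expr2.
have yx0 : vdot y (x i) = 0.
  have := psumr_eq0P (fun j _ => sqr_ge0 (vdot y (x j))) yx_sq0 (i := i) Qi.
  by move/eqP; rewrite sqrf_eq0 => /eqP.
have yPx0 : vdot y (A *m M *m x i) = 0.
  by rewrite vdotC vdot_sym_mxl // -mulmxA My mulmx0 vdot_mx mulmx0 mxE.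
have : vdot y y = 0 by rewrite {2}/y vdotC vdotBl !(vdotC _ y) yx0 yPx0 subrr.
by move/vdot_eq0/eqP; rewrite subr_eq0 => /eqP <-.
Qed.

End InnerProduct.

Lemma gd_iter_sub_fixed (R : rcfType) (d : nat) (P : 'M[R]_d) (th0 : 'cV[R]_d)
    (alpha : nat -> R) (Ds : nat -> dataset R d) (T : nat) :
  (forall t p, (t < T)%N -> p \in Ds t -> P *m p.1 = p.1) ->
  P *m (gd_iter th0 alpha Ds T - th0) = gd_iter th0 alpha Ds T - th0.
Proof.
move=> Pfix; suff /(_ T (leqnn T)) : forall t, (t <= T)%N ->
    P *m (gd_iter th0 alpha Ds t - th0) = gd_iter th0 alpha Ds t - th0 by [].
elim=> [|t IH] tT /=; first by rewrite subrr mulmx0.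
rewrite addrAC mulmxBr IH ?(ltnW tT) // -scalemxAr; congr (_ - _ *: _).
rewrite /gradL mulmx_sumr big_seq [RHS]big_seq; apply: eq_bigr => p Dp.
by rewrite -scalemxAr (Pfix t).
Qed.

Lemma sub_theta_res (R : rcfType) (n d k : nat) (X : 'M[R]_(n, d)) (M A : 'M[R]_d)
    (thfull thminus : 'cV[R]_d) :
  M = \sum_(i < n | (i < k)%N) xpt X i *m (xpt X i)^T ->
  thminus - theta_res k X A thfull thminus
    = (thminus - thfull) - A *m M *m (thminus - thfull).
Proof.
move->; rewrite /theta_res -mulmxA mulmx_sum_outer.
under [in RHS]eq_bigr do rewrite vdotBl -opprB scaleNr.
by rewrite sumrN mulmxN opprK opprB addrA addrAC.
Qed.

Theorem corollary2 (R : rcfType) (n d k : nat) (X : 'M[R]_(n, d)) (Y : 'cV[R]_n)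
  (lam : R) (thfull thminus : 'cV[R]_d) (A : 'M[R]_d)
  (T : nat) (alpha : nat -> R) (Ds : nat -> dataset R d) :
  (1 <= k)%N -> (k <= d)%N -> (d <= n - k)%N ->
  general_position X -> 0 <= lam ->
  is_argmin (loss_full X Y lam) thfull ->
  is_argmin (loss_minus k X Y lam) thminus ->
  is_MP_pinv (\sum_(i < n | (i < k)%N) xpt X i *m (xpt X i)^T) A ->
  (forall t, (t < T)%N ->
     uniq (Ds t) /\
     (forall p, p \in Ds t -> exists i : 'I_n, (i < k)%N /\ p.1 = xpt X i)) ->
  norm2 (thminus - theta_res k X A thfull thminus)
    <= norm2 (thminus - gd_iter thfull alpha Ds T).
Proof.
move=> _ _ _ _ _ _ _ [MAM AMA _ Psym] Ds_sub.
set M := \sum_(i < n | (i < k)%N) xpt X i *m (xpt X i)^T; set P := A *m M.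
have Pidem : P *m P = P by rewrite /P mulmxA AMA.
have Pfix : forall i : 'I_n, (i < k)%N -> P *m xpt X i = xpt X i.
  exact: (@pinv_proj_fix_outer R d n (xpt X) (fun i => (i < k)%N) M A erefl).
have Pgd : P *m (gd_iter thfull alpha Ds T - thfull) = gd_iter thfull alpha Ds T - thfull.
  apply: gd_iter_sub_fixed => t p tT Dp.
  by have [_ /(_ p Dp) [i [ik ->]]] := Ds_sub t tT; apply: Pfix.
rewrite (@sub_theta_res R n d k X M A thfull thminus erefl) -/P.
have -> : thminus - gd_iter thfull alpha Ds T
    = (thminus - thfull) - (gd_iter thfull alpha Ds T - thfull).
  by rewrite opprB addrA subrK.
exact: norm2_sub_proj_le.
Qed.
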